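(* Let $\alpha>0$ and let $\mathit{rc}_\alpha$ be the rate of change function defined below. Then $\mathit{rc}_\alpha(x)<0$ for all $x\in(-1,1)$.
   Context: Let $\alpha>0$, $\varepsilon_\alpha=\frac{1}{4\alpha^2}$. The constant function $u\equiv\alpha$ solves the Helfrich Dirichlet problem $\frac{1}{u\sqrt{1+u'^2}}\frac{d}{dx}\bigl(\frac{u}{\sqrt{1+u'^2}}H'\bigr)+\frac12 H\bigl(\frac{u''}{(1+u'^2)^{3/2}}+\frac{1}{u\sqrt{1+u'^2}}\bigr)^2-2\varepsilon H=0$ in $(-1,1)$, $u(\pm1)=\alpha$, $u'(\pm1)=0$ (with $H=\frac12(\frac{1}{u\sqrt{1+u'^2}}-\frac{u''}{(1+u'^2)^{3/2}})$) for $\varepsilon=\varepsilon_\alpha$, and by the implicit function theorem there is a smooth family $(u_\varepsilon)$ of solutions for $\varepsilon$ near $\varepsilon_\alpha$ with $u_{\varepsilon_\alpha}\equiv\alpha$. The rate of change function is $\mathit{rc}_\alpha:=\frac{\partial u_\varepsilon}{\partial\varepsilon}\big|_{\varepsilon=\varepsilon_\alpha}$; equivalently, $\mathit{rc}_\alpha$ is the unique solution of $\mathit{rc}_\alpha^{(iv)}+\frac{1}{\alpha^4}\mathit{rc}_\alpha=-\frac{2}{\alpha}$ in $(-1,1)$, $\mathit{rc}_\alpha(\pm1)=\mathit{rc}_\alpha'(\pm1)=0$. *)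

From Stdlib Require Import Reals.
From Coquelicot Require Import Coquelicot.
Open Scope R_scope.

(* [is_rate_of_change alpha f]: f is a solution of the boundary value problem
     f'''' + f / alpha^4 = -2/alpha  in (-1,1),
     f(+-1) = 0,  f'(+-1) = 0,
   which (by the context) uniquely characterises rc_alpha. *)
Definition is_rate_of_change (alpha : R) (f : R -> R) : Prop :=
  (forall (k : nat) (x : R), (k <= 4)%nat -> -1 < x < 1 -> ex_derive_n f k x) /\
  (forall x : R, -1 < x < 1 ->
     Derive_n f 4 x + f x / alpha ^ 4 = - (2 / alpha)) /\
  f (-1) = 0 /\ f 1 = 0 /\
  filterlim f (at_right (-1)) (locally 0) /\
  filterlim f (at_left 1) (locally 0) /\
  filterlim (Derive f) (at_right (-1)) (locally 0) /\
  filterlim (Derive f) (at_left 1) (locally 0).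

From Stdlib Require Import Reals Lra Lia.
From Coquelicot Require Import Coquelicot.
Open Scope R_scope.

(* With a = 1/(sqrt 2 alpha) and m = 2 alpha^3, u = rc + m solves u'''' + 4 a^4 u = 0,
   whose solutions are the combinations of cosh(ax)cos(ax), sinh(ax)sin(ax),
   cosh(ax)sin(ax) and sinh(ax)cos(ax) (uniqueness for the initial value problem
   follows from a Gronwall estimate on the energy sum of the squares of u, ..., u''').
   The clamped conditions u(+-1) = m, u'(+-1) = 0 kill the odd part, because
   sinh a cosh a > |sin a cos a|, and fix the even part; this gives
     (sinh a cosh a + sin a cos a) (rc x) / m
       = (cosh a sin a + sinh a cos a) cosh(ax) cos(ax)
         + (cosh a sin a - sinh a cos a) sinh(ax) sin(ax) - (sinh a cosh a + sin a cos a),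
   which equals -1/2 [(sinh u - sin u)(cosh v - cos v) + (sinh v - sin v)(cosh u - cos u)]
   with u = a(1 + x), v = a(1 - x) > 0, hence is negative. *)

Lemma cosh_neg (t : R) : cosh (- t) = cosh t.
Proof. unfold cosh. rewrite Ropp_involutive. lra. Qed.

Lemma sinh_neg (t : R) : sinh (- t) = - sinh t.
Proof. unfold sinh. rewrite Ropp_involutive. lra. Qed.

Lemma cosh_plus (x y : R) : cosh (x + y) = cosh x * cosh y + sinh x * sinh y.
Proof. unfold cosh, sinh. rewrite Ropp_plus_distr, !exp_plus. field. Qed.

Lemma sinh_plus (x y : R) : sinh (x + y) = sinh x * cosh y + cosh x * sinh y.
Proof. unfold cosh, sinh. rewrite Ropp_plus_distr, !exp_plus. field. Qed.

Lemma cosh2_sinh2 (t : R) : cosh t ^ 2 - sinh t ^ 2 = 1.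
Proof.
  unfold cosh, sinh.
  assert (Hinv : exp t * exp (- t) = 1) by (rewrite <- exp_plus, Rplus_opp_r; apply exp_0).
  field_simplify. rewrite <- Hinv. field.
Qed.

Lemma cosh_gt_1 (t : R) : t <> 0 -> 1 < cosh t.
Proof.
  intros Ht. unfold cosh.
  pose proof (exp_ineq1 t Ht). pose proof (exp_ineq1 (- t) ltac:(lra)). lra.
Qed.

Lemma sinh_gt_id (t : R) : 0 < t -> t < sinh t.
Proof.
  intros Ht.
  destruct (MVT_cor2 (fun y => sinh y - y) (fun y => cosh y - 1) 0 t Ht) as [c [Hc Hct]].
  { intros c _. apply is_derive_Reals. unfold sinh, cosh. auto_derive; [exact I | field]. }
  rewrite sinh_0 in Hc. pose proof (cosh_gt_1 c ltac:(lra)). nra.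
Qed.

Lemma sin_lt_sinh (t : R) : 0 < t -> sin t < sinh t.
Proof. intros Ht. pose proof (sin_lt_x t Ht). pose proof (sinh_gt_id t Ht). lra. Qed.

Lemma cos_lt_cosh (t : R) : 0 < t -> cos t < cosh t.
Proof. intros Ht. pose proof (COS_bound t). pose proof (cosh_gt_1 t ltac:(lra)). lra. Qed.

Lemma abs_sin_lt_sinh (t : R) : 0 < t -> Rabs (sin t) < sinh t.
Proof.
  intros Ht. apply Rabs_lt_between. split; [|now apply sin_lt_sinh].
  pose proof (sinh_gt_id t Ht).
  destruct (Rlt_or_le t PI) as [HtPI | HPIt].
  - pose proof (sin_gt_0 t Ht HtPI). lra.
  - pose proof PI2_1. pose proof (SIN_bound t). lra.
Qed.

Lemma abs_sin_cos_lt_sinh_cosh (t : R) : 0 < t -> Rabs (sin t * cos t) < sinh t * cosh t.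
Proof.
  intros Ht. pose proof (abs_sin_lt_sinh (t + t) ltac:(lra)) as H.
  rewrite sinh_plus, sin_plus, Rabs_lt_between in H.
  apply Rabs_lt_between. lra.
Qed.

Record coeffs : Type := Coeffs { c_cc : R; c_ss : R; c_cs : R; c_sc : R }.

(* The four products span the solutions of u'''' + 4 a^4 u = 0. *)
Definition basis_comb (a : R) (c : coeffs) (x : R) : R :=
  c_cc c * (cosh (a * x) * cos (a * x)) + c_ss c * (sinh (a * x) * sin (a * x))
  + c_cs c * (cosh (a * x) * sin (a * x)) + c_sc c * (sinh (a * x) * cos (a * x)).

Definition coeffs_deriv (a : R) (c : coeffs) : coeffs :=
  Coeffs (a * (c_cs c + c_sc c)) (a * (c_cs c - c_sc c))
         (a * (c_ss c - c_cc c)) (a * (c_cc c + c_ss c)).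

Lemma is_derive_basis_comb (a : R) (c : coeffs) (x : R) :
  is_derive (basis_comb a c) x (basis_comb a (coeffs_deriv a c) x).
Proof.
  unfold basis_comb, coeffs_deriv, cosh, sinh; simpl.
  auto_derive; [exact I | field].
Qed.

Lemma continuous_basis_comb (a : R) (c : coeffs) (x : R) : continuous (basis_comb a c) x.
Proof.
  apply (@ex_derive_continuous R_AbsRing R_NormedModule).
  eexists. apply is_derive_basis_comb.
Qed.

Lemma basis_comb_deriv4 (a : R) (c : coeffs) (x : R) :
  basis_comb a (coeffs_deriv a (coeffs_deriv a (coeffs_deriv a (coeffs_deriv a c)))) x
  = - (4 * a ^ 4) * basis_comb a c x.
Proof. unfold basis_comb; simpl. ring. Qed.

Lemma basis_comb_0 (a : R) (c : coeffs) : basis_comb a c 0 = c_cc c.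
Proof. unfold basis_comb. rewrite Rmult_0_r, cosh_0, sinh_0, cos_0, sin_0. ring. Qed.

Lemma basis_comb_1 (a : R) (c : coeffs) :
  basis_comb a c 1 = (c_cc c * (cosh a * cos a) + c_ss c * (sinh a * sin a))
                     + (c_cs c * (cosh a * sin a) + c_sc c * (sinh a * cos a)).
Proof. unfold basis_comb. rewrite Rmult_1_r. ring. Qed.

Lemma basis_comb_m1 (a : R) (c : coeffs) :
  basis_comb a c (-1) = (c_cc c * (cosh a * cos a) + c_ss c * (sinh a * sin a))
                        - (c_cs c * (cosh a * sin a) + c_sc c * (sinh a * cos a)).
Proof.
  unfold basis_comb. replace (a * -1) with (- a) by ring.
  rewrite cosh_neg, sinh_neg, cos_neg, sin_neg. ring.
Qed.

Lemma gronwall_nonpos (E dE : R -> R) (L a b : R) :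
  a <= b ->
  (forall t, a <= t <= b -> is_derive E t (dE t)) ->
  (forall t, a <= t <= b -> dE t <= L * E t) ->
  E a <= 0 -> E b <= 0.
Proof.
  intros Hab HE Hgrowth Ha.
  destruct (Req_dec a b) as [<- | Hne]; [exact Ha |].
  (* [E(t) exp(-L t)] is nonincreasing. *)
  destruct (MVT_cor2 (fun t => E t * exp (- L * t))
              (fun t => (dE t - L * E t) * exp (- L * t)) a b) as [c [Hc Hcab]];
    [lra | |].
  - intros t Ht. apply is_derive_Reals.
    replace ((dE t - L * E t) * exp (- L * t))
      with (dE t * exp (- L * t) + E t * (- L * exp (- L * t))) by ring.
    apply (is_derive_mult E (fun t => exp (- L * t))); [now apply HE | | exact Rmult_comm].
    auto_derive; [exact I | ring].
  - pose proof (Hgrowth c ltac:(lra)). pose proof (exp_pos (- L * a)).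
    pose proof (exp_pos (- L * b)). pose proof (exp_pos (- L * c)).
    assert (Hslope : (dE c - L * E c) * exp (- L * c) * (b - a) <= 0).
    { apply Rmult_le_0_r; [apply Rmult_le_0_r |]; lra. }
    assert (E b * exp (- L * b) <= 0) by nra.
    nra.
Qed.

Lemma gronwall_nonpos_backward (E dE : R -> R) (L a b : R) :
  a <= b ->
  (forall t, a <= t <= b -> is_derive E t (dE t)) ->
  (forall t, a <= t <= b -> - (L * E t) <= dE t) ->
  E b <= 0 -> E a <= 0.
Proof.
  intros Hab HE Hgrowth Hb.
  rewrite <- (Ropp_involutive a).
  apply (gronwall_nonpos (fun t => E (- t)) (fun t => - dE (- t)) L (- b)); [lra | | | ].
  - intros t Ht.
    replace (- dE (- t)) with (scal (-1) (dE (- t)))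
      by (unfold scal; simpl; unfold mult; simpl; ring).
    apply (is_derive_comp E Ropp); [apply HE; lra |].
    apply (is_derive_opp (fun y => y) t 1). apply (@is_derive_id R_AbsRing).
  - intros t Ht. pose proof (Hgrowth (- t) ltac:(lra)). lra.
  - now rewrite Ropp_involutive.
Qed.

Lemma energy4_derivative_bound (k z0 z1 z2 z3 : R) :
  Rabs (2 * (z0 * z1 + z1 * z2 + z2 * z3 + z3 * (- k * z0)))
  <= (2 + Rabs k) * (z0 ^ 2 + z1 ^ 2 + z2 ^ 2 + z3 ^ 2).
Proof.
  apply Rabs_le_between.
  pose proof (pow2_ge_0 (z0 - z1)). pose proof (pow2_ge_0 (z0 + z1)).
  pose proof (pow2_ge_0 (z1 - z2)). pose proof (pow2_ge_0 (z1 + z2)).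
  pose proof (pow2_ge_0 (z2 - z3)). pose proof (pow2_ge_0 (z2 + z3)).
  pose proof (pow2_ge_0 z0). pose proof (pow2_ge_0 z3).
  assert (Hk : 0 <= Rabs k * (z3 + z0) ^ 2 /\ 0 <= Rabs k * (z3 - z0) ^ 2)
    by (split; apply Rmult_le_pos; auto using Rabs_pos, pow2_ge_0).
  unfold Rabs in *; destruct (Rcase_abs k); split; nra.
Qed.

Lemma is_derive_square (w : R -> R) (t dw : R) :
  is_derive w t dw -> is_derive (fun s => w s ^ 2) t (2 * w t * dw).
Proof.
  intros Hw. replace (2 * w t * dw) with (INR 2 * dw * w t ^ Nat.pred 2) by (simpl; ring).
  now apply is_derive_pow.
Qed.

Lemma ode4_zero_initial_data (k lo hi : R) (w0 w1 w2 w3 : R -> R) :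
  lo < 0 < hi ->
  (forall t, lo < t < hi -> is_derive w0 t (w1 t)) ->
  (forall t, lo < t < hi -> is_derive w1 t (w2 t)) ->
  (forall t, lo < t < hi -> is_derive w2 t (w3 t)) ->
  (forall t, lo < t < hi -> is_derive w3 t (- k * w0 t)) ->
  w0 0 = 0 -> w1 0 = 0 -> w2 0 = 0 -> w3 0 = 0 ->
  forall t, lo < t < hi -> w0 t = 0 /\ w1 t = 0 /\ w2 t = 0 /\ w3 t = 0.
Proof.
  intros Hlohi Hw0 Hw1 Hw2 Hw3 I0 I1 I2 I3 t Ht.
  set (E := fun s => w0 s ^ 2 + w1 s ^ 2 + w2 s ^ 2 + w3 s ^ 2).
  set (dE := fun s => 2 * (w0 s * w1 s + w1 s * w2 s + w2 s * w3 s + w3 s * (- k * w0 s))).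
  set (L := 2 + Rabs k).
  assert (HE : forall s, lo < s < hi -> is_derive E s (dE s)).
  { intros s Hs. unfold E, dE.
    replace (2 * (w0 s * w1 s + w1 s * w2 s + w2 s * w3 s + w3 s * (- k * w0 s)))
      with (plus (plus (plus (2 * w0 s * w1 s) (2 * w1 s * w2 s)) (2 * w2 s * w3 s))
              (2 * w3 s * (- k * w0 s))) by (unfold plus; simpl; ring).
    apply (is_derive_plus (fun s => w0 s ^ 2 + w1 s ^ 2 + w2 s ^ 2) (fun s => w3 s ^ 2));
      [apply (is_derive_plus (fun s => w0 s ^ 2 + w1 s ^ 2) (fun s => w2 s ^ 2));
        [apply (is_derive_plus (fun s => w0 s ^ 2) (fun s => w1 s ^ 2)) |] |];
      apply is_derive_square; auto. }
  assert (Hgrowth : forall s, - (L * E s) <= dE s <= L * E s).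
  { intros s. apply Rabs_le_between. apply energy4_derivative_bound. }
  assert (HE0 : E 0 = 0) by (unfold E; rewrite I0, I1, I2, I3; ring).
  assert (HEt : E t <= 0).
  { destruct (Rle_or_lt 0 t).
    - apply (gronwall_nonpos E dE L 0 t); [lra | | | lra].
      + intros s Hs. apply HE. lra.
      + intros s _. apply Hgrowth.
    - apply (gronwall_nonpos_backward E dE L t 0); [lra | | | lra].
      + intros s Hs. apply HE. lra.
      + intros s _. apply Hgrowth. }
  unfold E in HEt.
  pose proof (pow2_ge_0 (w0 t)). pose proof (pow2_ge_0 (w1 t)).
  pose proof (pow2_ge_0 (w2 t)). pose proof (pow2_ge_0 (w3 t)).
  repeat split; apply Rsqr_0_uniq; unfold Rsqr; simpl in HEt |- *; lra.
Qed.

Lemma endpoint_values_of_limits (f G : R -> R) (lo hi l : R) :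
  lo < hi ->
  (forall y, lo < y < hi -> f y = G y) ->
  continuous G lo -> continuous G hi ->
  filterlim f (at_right lo) (locally l) -> filterlim f (at_left hi) (locally l) ->
  G lo = l /\ G hi = l.
Proof.
  intros Hlohi Hfg Hlo Hhi Hflo Hfhi.
  assert (Hwidth : 0 < hi - lo) by lra.
  split.
  - apply (filterlim_locally_unique (F := at_right lo) G);
      [exact (filterlim_filter_le_1 G (filter_le_within _) Hlo) |].
    apply (filterlim_ext_loc f); [| exact Hflo].
    exists (mkposreal _ Hwidth). intros y Hy Hylo. apply Hfg.
    apply (proj1 (Rabs_lt_between' _ _ _)) in Hy. simpl in Hy. lra.
  - apply (filterlim_locally_unique (F := at_left hi) G);
      [exact (filterlim_filter_le_1 G (filter_le_within _) Hhi) |].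
    apply (filterlim_ext_loc f); [| exact Hfhi].
    exists (mkposreal _ Hwidth). intros y Hy Hyhi. apply Hfg.
    apply (proj1 (Rabs_lt_between' _ _ _)) in Hy. simpl in Hy. lra.
Qed.

Lemma is_derive_sub_basis_comb (g : R -> R) (a x dg : R) (c : coeffs) :
  is_derive g x dg ->
  is_derive (fun t => g t - basis_comb a c t) x (dg - basis_comb a (coeffs_deriv a c) x).
Proof. intros Hg. apply (is_derive_minus g); [exact Hg | apply is_derive_basis_comb]. Qed.

Lemma ode4_representation (a m lo hi : R) (f : R -> R) :
  a <> 0 -> lo < 0 < hi ->
  (forall k x, (k <= 4)%nat -> lo < x < hi -> ex_derive_n f k x) ->
  (forall x, lo < x < hi -> Derive_n f 4 x = - (4 * a ^ 4) * (f x + m)) ->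
  exists c : coeffs, forall x, lo < x < hi ->
    f x + m = basis_comb a c x /\ Derive f x = basis_comb a (coeffs_deriv a c) x.
Proof.
  intros Ha Hlohi Hex Hode.
  assert (Hder : forall j t, (j < 4)%nat -> lo < t < hi ->
                   is_derive (Derive_n f j) t (Derive_n f (S j) t)).
  { intros j t Hj Ht. apply Derive_correct, (Hex (S j) t); [lia | exact Ht]. }
  (* Coefficients matching the values of [f + m, f', f'', f'''] at 0. *)
  set (c0 := Coeffs (f 0 + m) (Derive_n f 2 0 / (2 * a ^ 2))
               ((Derive_n f 1 0 / a + Derive_n f 3 0 / (2 * a ^ 3)) / 2)
               ((Derive_n f 1 0 / a - Derive_n f 3 0 / (2 * a ^ 3)) / 2)).
  set (c1 := coeffs_deriv a c0). set (c2 := coeffs_deriv a c1). set (c3 := coeffs_deriv a c2).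
  set (w0 := fun t => (f t + m) - basis_comb a c0 t).
  set (w := fun j c t => Derive_n f j t - basis_comb a c t).
  assert (Hw0 : forall t, lo < t < hi -> is_derive w0 t (w 1%nat c1 t)).
  { intros t Ht. apply is_derive_sub_basis_comb.
    replace (Derive_n f 1 t) with (plus (Derive_n f 1 t) zero)
      by (unfold plus, zero; simpl; ring).
    apply (is_derive_plus f (fun _ => m)); [exact (Hder 0%nat t ltac:(lia) Ht) |].
    apply (@is_derive_const R_AbsRing R_NormedModule). }
  assert (Hw1 : forall t, lo < t < hi -> is_derive (w 1%nat c1) t (w 2%nat c2 t)).
  { intros t Ht. apply is_derive_sub_basis_comb, Hder; [lia | exact Ht]. }
  assert (Hw2 : forall t, lo < t < hi -> is_derive (w 2%nat c2) t (w 3%nat c3 t)).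
  { intros t Ht. apply is_derive_sub_basis_comb, Hder; [lia | exact Ht]. }
  assert (Hw3 : forall t, lo < t < hi -> is_derive (w 3%nat c3) t (- (4 * a ^ 4) * w0 t)).
  { intros t Ht.
    replace (- (4 * a ^ 4) * w0 t) with (Derive_n f 4 t - basis_comb a (coeffs_deriv a c3) t)
      by (unfold w0, c3, c2, c1; rewrite Hode, basis_comb_deriv4 by exact Ht; ring).
    apply is_derive_sub_basis_comb, Hder; [lia | exact Ht]. }
  assert (Ha2 : a ^ 2 <> 0) by (apply pow_nonzero, Ha).
  assert (Ha3 : a ^ 3 <> 0) by (apply pow_nonzero, Ha).
  assert (I0 : w0 0 = 0) by (unfold w0; rewrite basis_comb_0; simpl; ring).
  assert (I1 : w 1%nat c1 0 = 0) by (unfold w; rewrite basis_comb_0; simpl; field; auto).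
  assert (I2 : w 2%nat c2 0 = 0) by (unfold w; rewrite basis_comb_0; simpl; field; auto).
  assert (I3 : w 3%nat c3 0 = 0) by (unfold w; rewrite basis_comb_0; simpl; field; auto).
  exists c0. intros x Hx.
  destruct (ode4_zero_initial_data (4 * a ^ 4) lo hi w0 (w 1%nat c1) (w 2%nat c2) (w 3%nat c3)
              Hlohi Hw0 Hw1 Hw2 Hw3 I0 I1 I2 I3 x Hx) as [H0 [H1 _]].
  unfold w0, w, c1 in H0, H1. change (Derive_n f 1 x) with (Derive f x) in H1. split; lra.
Qed.
Lemma clamped_profile_identity (a y : R) :
  2 * ((cosh a * sin a + sinh a * cos a) * (cosh y * cos y)
       + (cosh a * sin a - sinh a * cos a) * (sinh y * sin y)
       - (sinh a * cosh a + sin a * cos a))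
  = - ((sinh (a + y) - sin (a + y)) * (cosh (a - y) - cos (a - y))
       + (sinh (a - y) - sin (a - y)) * (cosh (a + y) - cos (a + y))).
Proof.
  replace (a - y) with (a + - y) by ring.
  rewrite !sinh_plus, !cosh_plus, !sin_plus, !cos_plus, sinh_neg, cosh_neg, sin_neg, cos_neg.
  pose proof (cosh2_sinh2 y) as Hh. pose proof (sin2_cos2 y) as Ht. unfold Rsqr in Ht.
  replace (sinh a * cosh a) with (sinh a * cosh a * (cosh y ^ 2 - sinh y ^ 2))
    by (rewrite Hh; ring).
  replace (sin a * cos a) with (sin a * cos a * (sin y * sin y + cos y * cos y))
    by (rewrite Ht; ring).
  ring.
Qed.

Lemma clamped_profile_lt (a y : R) :
  - a < y < a ->
  (cosh a * sin a + sinh a * cos a) * (cosh y * cos y)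
  + (cosh a * sin a - sinh a * cos a) * (sinh y * sin y)
  < sinh a * cosh a + sin a * cos a.
Proof.
  intros Hy.
  assert (Hpos : forall u v, 0 < u -> 0 < v -> 0 < (sinh u - sin u) * (cosh v - cos v)).
  { intros u v Hu Hv. apply Rmult_lt_0_compat.
    - pose proof (sin_lt_sinh u Hu). lra.
    - pose proof (cos_lt_cosh v Hv). lra. }
  pose proof (clamped_profile_identity a y) as Hid.
  pose proof (Hpos (a + y) (a - y) ltac:(lra) ltac:(lra)).
  pose proof (Hpos (a - y) (a + y) ltac:(lra) ltac:(lra)).
  lra.
Qed.

Section ClampedBoundary.

Variables (a m : R) (c : coeffs).
Hypothesis a_gt0 : 0 < a.
Hypothesis value_m1 : basis_comb a c (-1) = m.
Hypothesis value_1 : basis_comb a c 1 = m.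
Hypothesis slope_m1 : basis_comb a (coeffs_deriv a c) (-1) = 0.
Hypothesis slope_1 : basis_comb a (coeffs_deriv a c) 1 = 0.

Lemma clamped_odd_coeffs_vanish : c_cs c = 0 /\ c_sc c = 0.
Proof.
  rewrite basis_comb_1 in value_1, slope_1. rewrite basis_comb_m1 in value_m1, slope_m1.
  pose proof (abs_sin_cos_lt_sinh_cosh a a_gt0) as Hdet. apply Rabs_lt_between in Hdet.
  pose proof (cosh2_sinh2 a) as Hh. pose proof (sin2_cos2 a) as Ht. unfold Rsqr in Ht.
  destruct c as [A B p q]; cbn [coeffs_deriv c_cc c_ss c_cs c_sc] in *.
  set (h := cosh a) in *. set (g := sinh a) in *. set (s := sin a) in *. set (co := cos a) in *.
  assert (O1 : p * (h * s) + q * (g * co) = 0) by lra.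
  assert (O2 : (p + q) * (h * co) + (p - q) * (g * s) = 0).
  { apply (Rmult_eq_reg_l a); [| lra]. lra. }
  assert (Hdet_ne0 : s * co - h * g <> 0) by lra.
  assert (Hdet_expand : s * co * (h ^ 2 - g ^ 2) - h * g * (s * s + co * co) = s * co - h * g)
    by (rewrite Hh, Ht; ring).
  split; apply (Rmult_eq_reg_r (s * co - h * g)); auto; rewrite <- Hdet_expand.
  - transitivity ((h * co - g * s) * (p * (h * s) + q * (g * co))
                  - g * co * ((p + q) * (h * co) + (p - q) * (g * s))); [ring |].
    rewrite O1, O2. ring.
  - transitivity (- (h * co + g * s) * (p * (h * s) + q * (g * co))
                  + h * s * ((p + q) * (h * co) + (p - q) * (g * s))); [ring |].
    rewrite O1, O2. ring.
Qed.

Lemma clamped_even_coeffs :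
  (sinh a * cosh a + sin a * cos a) * c_cc c = m * (cosh a * sin a + sinh a * cos a) /\
  (sinh a * cosh a + sin a * cos a) * c_ss c = m * (cosh a * sin a - sinh a * cos a).
Proof.
  rewrite basis_comb_1 in value_1, slope_1. rewrite basis_comb_m1 in value_m1, slope_m1.
  pose proof (cosh2_sinh2 a) as Hh. pose proof (sin2_cos2 a) as Ht. unfold Rsqr in Ht.
  destruct c as [A B p q]; cbn [coeffs_deriv c_cc c_ss c_cs c_sc] in *.
  set (h := cosh a) in *. set (g := sinh a) in *. set (s := sin a) in *. set (co := cos a) in *.
  assert (E1 : A * (h * co) + B * (g * s) = m) by lra.
  assert (E2 : (B - A) * (h * s) + (A + B) * (g * co) = 0).
  { apply (Rmult_eq_reg_l a); [| lra]. lra. }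
  replace (g * h + s * co) with (s * co * (h ^ 2 - g ^ 2) + h * g * (s * s + co * co))
    by (rewrite Hh, Ht; ring).
  split.
  - transitivity ((h * s + g * co) * (A * (h * co) + B * (g * s))
                  - g * s * ((B - A) * (h * s) + (A + B) * (g * co))); [ring |].
    rewrite E1, E2. ring.
  - transitivity (h * co * ((B - A) * (h * s) + (A + B) * (g * co))
                  - (g * co - h * s) * (A * (h * co) + B * (g * s))); [ring |].
    rewrite E1, E2. ring.
Qed.

Lemma clamped_basis_comb_lt (x : R) : 0 < m -> -1 < x < 1 -> basis_comb a c x < m.
Proof.
  intros Hm Hx.
  destruct clamped_odd_coeffs_vanish as [Hp Hq].
  destruct clamped_even_coeffs as [HA HB].
  pose proof (clamped_profile_lt a (a * x) ltac:(split; nra)) as Hprofile.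
  pose proof (abs_sin_cos_lt_sinh_cosh a a_gt0) as Hdet. apply Rabs_lt_between in Hdet.
  set (det := sinh a * cosh a + sin a * cos a) in *.
  assert (Hclosed : det * (basis_comb a c x - m)
    = m * ((cosh a * sin a + sinh a * cos a) * (cosh (a * x) * cos (a * x))
           + (cosh a * sin a - sinh a * cos a) * (sinh (a * x) * sin (a * x)) - det)).
  { transitivity ((det * c_cc c) * (cosh (a * x) * cos (a * x))
                  + (det * c_ss c) * (sinh (a * x) * sin (a * x)) - det * m).
    - unfold basis_comb. rewrite Hp, Hq. ring.
    - rewrite HA, HB. ring. }
  assert (Hdet_pos : 0 < det) by (unfold det; lra).
  assert (Hneg : det * (basis_comb a c x - m) < det * 0).
  { rewrite Hclosed, Rmult_0_r, <- (Rmult_0_r m). apply Rmult_lt_compat_l; lra. }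
  apply Rmult_lt_reg_l in Hneg; lra.
Qed.

End ClampedBoundary.

Lemma quartic_scaling (alpha : R) :
  0 < alpha -> exists a, 0 < a /\ 4 * a ^ 4 * alpha ^ 4 = 1.
Proof.
  intros Halpha. exists (/ (sqrt 2 * alpha)).
  assert (Hsqrt : 0 < sqrt 2) by (apply sqrt_lt_R0; lra).
  split; [apply Rinv_0_lt_compat; nra |].
  replace ((/ (sqrt 2 * alpha)) ^ 4) with (/ ((sqrt 2 * sqrt 2) ^ 2 * alpha ^ 4))
    by (field; lra).
  rewrite sqrt_sqrt by lra. field. lra.
Qed.

Lemma rate_of_change_ode_rescaled (alpha a y d4 : R) :
  0 < alpha -> 4 * a ^ 4 * alpha ^ 4 = 1 ->
  d4 + y / alpha ^ 4 = - (2 / alpha) ->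
  d4 = - (4 * a ^ 4) * (y + 2 * alpha ^ 3).
Proof.
  intros Halpha Ha4 Hode.
  assert (Hpow : alpha ^ 4 <> 0) by (apply pow_nonzero; lra).
  replace (4 * a ^ 4) with (/ alpha ^ 4)
    by (apply (Rmult_eq_reg_r (alpha ^ 4)); [rewrite Rinv_l; lra | exact Hpow]).
  replace d4 with (- (2 / alpha) - y / alpha ^ 4) by lra.
  field. lra.
Qed.

Theorem theorem4p2 :
  forall (alpha : R) (rc : R -> R),
    0 < alpha ->
    is_rate_of_change alpha rc ->
    forall x : R, -1 < x < 1 -> rc x < 0.
Proof.
  intros alpha rc Halpha [Hex [Hode [_ [_ [Hlim_m1 [Hlim_1 [Hdlim_m1 Hdlim_1]]]]]]] x Hx.
  destruct (quartic_scaling alpha Halpha) as [a [Ha Ha4]].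
  set (m := 2 * alpha ^ 3).
  assert (Hm : 0 < m) by (apply Rmult_lt_0_compat; [lra | now apply pow_lt]).
  destruct (ode4_representation a m (-1) 1 rc) as [c Hc]; [lra | lra | exact Hex | |].
  { intros t Ht. exact (rate_of_change_ode_rescaled alpha a _ _ Halpha Ha4 (Hode t Ht)). }
  assert (Hvalues : basis_comb a c (-1) - m = 0 /\ basis_comb a c 1 - m = 0).
  { apply (endpoint_values_of_limits rc (fun y => basis_comb a c y - m));
      [lra | | | | exact Hlim_m1 | exact Hlim_1].
    - intros y Hy. rewrite <- (proj1 (Hc y Hy)). ring.
    - exact (continuous_minus _ _ _ (continuous_basis_comb a c _) (continuous_const _ _)).
    - exact (continuous_minus _ _ _ (continuous_basis_comb a c _) (continuous_const _ _)). }
  assert (Hslopes : basis_comb a (coeffs_deriv a c) (-1) = 0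
                    /\ basis_comb a (coeffs_deriv a c) 1 = 0).
  { apply (endpoint_values_of_limits (Derive rc)); [lra | | | | exact Hdlim_m1 | exact Hdlim_1].
    - intros y Hy. exact (proj2 (Hc y Hy)).
    - apply continuous_basis_comb.
    - apply continuous_basis_comb. }
  destruct Hvalues as [Hvalue_m1 Hvalue_1]. destruct Hslopes as [Hslope_m1 Hslope_1].
  pose proof (clamped_basis_comb_lt a m c Ha ltac:(lra) ltac:(lra) Hslope_m1 Hslope_1 x Hm Hx).
  pose proof (proj1 (Hc x Hx)). lra.
Qed.
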